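(* Let $\mathcal{S}$ be a finite set of road segments and $y_1,\dots,y_N$ (collectively $y_{[N]}$) the routes of $N$ historical trips, each a nonempty set of distinct segments. For each $n$ and $s\in y_n$ one observes $T'_{n,s}=\theta_s+\varepsilon_{n,s}$, where the $\theta_s$ are i.i.d. with mean $\mu$ and variance $\tau^2$, independent of the errors; for each $n$ the errors $(\varepsilon_{n,s})_{s\in y_n}$ have mean $0$ and covariances $\sigma_{s,t}$; errors from different trips are independent. Fix a route $y\subseteq\mathcal{S}$. (1) Let $\mathscr{S}_y$ be a partition of $y$ into nonempty disjoint sets (super-segments), and for a set $S$ of segments let $N_S=|\{n: S\subseteq y_n\}|$. For functions $\phi_S:\mathbb{Z}_{\ge0}\to\mathbb{R}$ with $\phi_S(0)=0$, consider the generalized segment-based estimator $$\hat\Theta^{(\mathrm{g\text{-}seg})}_y=\sum_{S\in\mathscr{S}_y}\Big[(1-\phi_S(N_S))|S|\mu+\phi_S(N_S)\frac{\sum_{n:S\subseteq y_n}\sum_{s\in S}T'_{n,s}}{N_S}\Big].$$ Its integrated risk is $$R\big(\hat\Theta^{(\mathrm{g\text{-}seg})}_y\mid y_{[N]}\big)=\sum_{S,T\in\mathscr{S}_y}\frac{N_{S\cup T}}{N_SN_T}\phi_S(N_S)\phi_T(N_T)\Big(\sum_{s\in S,t\in T}\sigma_{s,t}\Big)+\sum_{S\in\mathscr{S}_y}(1-\phi_S(N_S))^2|S|\tau^2.$$ (2) Let $\delta(y)$ be a set of historical routes (the neighborhood of $y$), $M_{\delta(y)}=\sum_{n=1}^N\mathbf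 1\{y_n\in\delta(y)\}$, $N^{\delta(y)}_s=|\{n: y_n\in\delta(y), s\in y_n\}|$, $N^{\delta(y)}_{s\cup t}=|\{n: y_n\in\delta(y), s,t\in y_n\}|$, $\mathcal{S}_{\delta(y)}=\bigcup_{y'\in\delta(y)}y'$, and $\bar y_{\delta(y)}=\sum_{n:y_n\in\delta(y)}|y_n|/M_{\delta(y)}$. For a function $\phi_{\delta(y)}:\mathbb{Z}_{\ge0}\to\mathbb{R}$ with $\phi_{\delta(y)}(0)=0$, consider the route-based estimator $$\hat\Theta^{(\mathrm{route})}_y=(1-\phi_{\delta(y)}(M_{\delta(y)}))|y|\mu+\phi_{\delta(y)}(M_{\delta(y)})\frac{\sum_{n:y_n\in\delta(y)}\sum_{s\in y_n}T'_{n,s}}{M_{\delta(y)}}.$$ Writing $\phi=\phi_{\delta(y)}(M_{\delta(y)})$ and $M=M_{\delta(y)}$, its integrated risk is $$R\big(\hat\Theta^{(\mathrm{route})}_y\mid y_{[N]}\big)=\Big(\frac{\phi}{M}\Big)^2\Big(\sum_{s,t\in\mathcal{S}_{\delta(y)}}N^{\delta(y)}_{s\cup t}\sigma_{s,t}\Big)+\big(\phi(\bar y_{\delta(y)}-|y|)\mu\big)^2+\sum_{s\in\mathcal{S}_{\delta(y)}\setminus y}\Big(\phi\frac{N^{\delta(y)}_s}{M}\Big)^2\tau^2+\sum_{s\in y}\Big(1-\phi\frac{N^{\delta(y)}_s}{M}\Big)^2\tau^2.$$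
   Context: Convention $0/0=0$. For a route $y$, the integrated risk of an estimator $\hat\Theta_y$ is $R(\hat\Theta_y\mid y_{[N]})=\mathbb{E}[(\hat\Theta_y-\sum_{s\in y}\theta_s)^2\mid y_{[N]}]$, the expectation taken over the errors and the prior distribution of $\theta$, conditional on the historical routes. For $s=t$, $N_{s\cup s}=N_s$ and $N^{\delta(y)}_{s\cup s}=N^{\delta(y)}_s$. No distributional assumption beyond means and covariances is imposed. *)

From HB Require Import structures.
From mathcomp Require Import all_boot all_order all_algebra.
From mathcomp Require Import all_classical all_reals all_analysis.

Set Implicit Arguments.
Unset Strict Implicit.
Unset Printing Implicit Defensive.

Import Order.TTheory GRing.Theory Num.Theory.
Local Open Scope ring_scope.

Section TravelTime.
Context {d : measure_display} {Omega : measurableType d} {R : realType}.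
Context {S : finType} {N : nat}.

Definition Tobs (theta : S -> Omega -> R) (eps : 'I_N -> S -> Omega -> R)
  (n : 'I_N) (s : S) : Omega -> R := fun w => theta s w + eps n s w.

(* integrated risk E[(est - sum_{s in y} theta_s)^2] (conditional on the
   historical routes, which are deterministic data here) *)
Definition risk (P : probability Omega R) (est : Omega -> R)
  (theta : S -> Omega -> R) (y : {set S}) : \bar R :=
  'E_P[fun w : Omega => ((est w - \sum_(s in y) theta s w) ^+ 2)%R]%E.

Definition NS (yh : 'I_N -> {set S}) (A : {set S}) : nat :=
  #|[set n : 'I_N | A \subset yh n]|.

Definition gseg_est (yh : 'I_N -> {set S}) (Sy : {set {set S}})
  (phi : {set S} -> nat -> R) (mu : R)
  (theta : S -> Omega -> R) (eps : 'I_N -> S -> Omega -> R) : Omega -> R :=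
  fun w => \sum_(A in Sy)
    ((1 - phi A (NS yh A)) * #|A|%:R * mu
     + phi A (NS yh A) *
       ((\sum_(n : 'I_N | A \subset yh n) \sum_(s in A) Tobs theta eps n s w)
        / (NS yh A)%:R)).

Definition Mdel (yh : 'I_N -> {set S}) (delta : {set {set S}}) : nat :=
  #|[set n : 'I_N | yh n \in delta]|.

Definition Ndel1 (yh : 'I_N -> {set S}) (delta : {set {set S}}) (s : S) : nat :=
  #|[set n : 'I_N | (yh n \in delta) && (s \in yh n)]|.

Definition Ndel2 (yh : 'I_N -> {set S}) (delta : {set {set S}}) (s t : S) : nat :=
  #|[set n : 'I_N | [&& yh n \in delta, s \in yh n & t \in yh n]]|.

Definition Sdel (delta : {set {set S}}) : {set S} :=
  \bigcup_(y' in delta) y'.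

Definition ybar (yh : 'I_N -> {set S}) (delta : {set {set S}}) : R :=
  (\sum_(n : 'I_N | yh n \in delta) #|yh n|%:R) / (Mdel yh delta)%:R.

Definition route_est (yh : 'I_N -> {set S}) (delta : {set {set S}})
  (phid : nat -> R) (y : {set S}) (mu : R)
  (theta : S -> Omega -> R) (eps : 'I_N -> S -> Omega -> R) : Omega -> R :=
  fun w =>
    (1 - phid (Mdel yh delta)) * #|y|%:R * mu
    + phid (Mdel yh delta) *
      ((\sum_(n : 'I_N | yh n \in delta) \sum_(s in yh n) Tobs theta eps n s w)
       / (Mdel yh delta)%:R).

Definition moment_model (P : probability Omega R) (yh : 'I_N -> {set S})
  (theta : S -> Omega -> R) (eps : 'I_N -> S -> Omega -> R)
  (mu tau : R) (sigma : S -> S -> R) : Prop :=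
  (forall s, theta s \in Lfun P 2%:E) /\
      (forall n s, s \in yh n -> eps n s \in Lfun P 2%:E) /\
      (forall s, ('E_P[theta s])%E = mu%:E) /\
      (forall s, covariance P (theta s) (theta s) = (tau ^+ 2)%:E) /\
      (forall s t, s != t -> covariance P (theta s) (theta t) = 0%E) /\
      (forall n s, s \in yh n -> ('E_P[eps n s] = 0)%E) /\
      (forall n s t, s \in yh n -> t \in yh n ->
          covariance P (eps n s) (eps n t) = (sigma s t)%:E) /\
      (forall n m s t, n != m -> s \in yh n -> t \in yh m ->
          covariance P (eps n s) (eps m t) = 0%E) /\
      (forall n s t, s \in yh n -> covariance P (theta t) (eps n s) = 0%E).

End TravelTime.

From HB Require Import structures.
From mathcomp Require Import all_boot all_order all_algebra.
From mathcomp Require Import all_classical all_reals all_analysis.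
From mathcomp Require Import ring.

(** Both estimators, minus the target [\sum_(s in y) theta_s], are affine in the
    observations, [c + \sum_s a_s theta_s + \sum_n \sum_(s in y_n) b_(n,s) eps_(n,s)],
    and for any such combination the second-moment assumptions alone give
    [E[X^2] = (c + mu \sum_s a_s)^2 + tau^2 \sum_s a_s^2
              + \sum_n \sum_(s, t in y_n) b_(n,s) b_(n,t) sigma_(s,t)].
    For the segment estimator [a_s = phi_A - 1], and [b_(n,s) = phi_A / N_A] when
    trip [n] covers the block [A] containing [s], so the mean term vanishes; for
    the route estimator [a_s = phi N_s / M - [s \in y]] and [b_(n,s) = phi / M] on
    the trips of the neighbourhood. Regrouping by blocks and counting the trips
    that cover a pair of blocks (resp. of segments) produces the counts
    [N_(A :|: B)] (resp. [N_(s cup t)]) of the formulas. *)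

Import Order.TTheory GRing.Theory Num.Theory.
Local Open Scope ring_scope.

Section SecondMoments.
Context {d : measure_display} {Omega : measurableType d} {R : realType}.
Variable P : probability Omega R.
Local Notation L2 := (Lfun P 2%:E).

Definition mean (X : Omega -> R) : R := fine ('E_P[X])%E.
Definition cov (X Y : Omega -> R) : R := fine (covariance P X Y).

Lemma L2_Lfun1 {X : Omega -> R} : X \in L2 -> X \in Lfun P 1.
Proof. exact/Lfun_subset12/fin_num_measure. Qed.

Lemma expectation_L2 {X : Omega -> R} : X \in L2 -> ('E_P[X] = (mean X)%:E)%E.
Proof. by move=> /L2_Lfun1 X1; rewrite fineK ?expectation_fin_num. Qed.

Lemma covariance_L2 (X Y : Omega -> R) : X \in L2 -> Y \in L2 ->
  covariance P X Y = (cov X Y)%:E.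
Proof.
move=> X2 Y2; rewrite fineK//.
exact: covariance_fin_num (L2_Lfun1 X2) (L2_Lfun1 Y2) (Lfun2_mul_Lfun1 X2 Y2).
Qed.

(* The closure instances of [Lfun] are indexed by a proof of [1 <= p], which
   canonical-structure inference cannot supply: the [rpred*] lemmas do not fire. *)
Let L2_submod : submod_closed L2.
Proof. by apply: Lfun_submod_closed; rewrite lee1n. Qed.

Lemma L2_cst (c : R) : cst c \in L2.
Proof. exact: Lfun_cst. Qed.

Lemma L2D {X Y : Omega -> R} : X \in L2 -> Y \in L2 -> X + Y \in L2.
Proof. by move=> X2 Y2; rewrite -[X]scale1r; exact: L2_submod.2. Qed.

Lemma L2Z (a : R) {X : Omega -> R} : X \in L2 -> a *: X \in L2.
Proof. by move=> X2; rewrite -[_ *: _]addr0; exact: L2_submod.2 X2 (L2_cst 0). Qed.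

Lemma L2_sum (I : Type) (r : seq I) (p : pred I) (F : I -> Omega -> R) :
  (forall i, p i -> F i \in L2) -> \sum_(i <- r | p i) F i \in L2.
Proof.
move=> F2; apply: (big_ind (fun X => X \in L2)) => // [|X Y]; first exact: L2_cst.
exact: L2D.
Qed.

Lemma scale_mulr_fun (a : R) (X : Omega -> R) : a *: X = a \o* X.
Proof. by apply/funext => w /=; rewrite mulrC. Qed.

Lemma mean_cst (a : R) : mean (cst a) = a.
Proof. by rewrite /mean expectation_cst. Qed.

Lemma meanD (X Y : Omega -> R) : X \in L2 -> Y \in L2 ->
  mean (X + Y) = mean X + mean Y.
Proof.
by move=> X2 Y2; rewrite /mean expectationD ?L2_Lfun1// !expectation_L2.
Qed.

Lemma meanZ (a : R) (X : Omega -> R) : X \in L2 -> mean (a *: X) = a * mean X.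
Proof.
by move=> X2; rewrite /mean scale_mulr_fun expectationZl ?L2_Lfun1// expectation_L2.
Qed.

Lemma covC (X Y : Omega -> R) : cov X Y = cov Y X.
Proof. by rewrite /cov covarianceC. Qed.

Lemma cov_cstl (c : R) (Y : Omega -> R) : cov (cst c) Y = 0.
Proof. by rewrite /cov covariance_cst_l. Qed.

Lemma covDl (X Y Z : Omega -> R) : X \in L2 -> Y \in L2 -> Z \in L2 ->
  cov (X + Y) Z = cov X Z + cov Y Z.
Proof.
by move=> X2 Y2 Z2; rewrite /cov covarianceDl// !covariance_L2.
Qed.

Lemma covZl (a : R) (X Y : Omega -> R) : X \in L2 -> Y \in L2 ->
  cov (a *: X) Y = a * cov X Y.
Proof.
move=> X2 Y2; rewrite /cov scale_mulr_fun.
rewrite covarianceZl ?covariance_L2 ?(L2_Lfun1 X2) ?(L2_Lfun1 Y2)//.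
exact: Lfun2_mul_Lfun1.
Qed.

Lemma cov_cstr (c : R) (X : Omega -> R) : cov X (cst c) = 0.
Proof. by rewrite covC cov_cstl. Qed.

Lemma covZr (a : R) (X Y : Omega -> R) : X \in L2 -> Y \in L2 ->
  cov X (a *: Y) = a * cov X Y.
Proof. by move=> X2 Y2; rewrite covC covZl// covC. Qed.

Lemma covDr (X Y Z : Omega -> R) : X \in L2 -> Y \in L2 -> Z \in L2 ->
  cov Z (X + Y) = cov Z X + cov Z Y.
Proof. by move=> X2 Y2 Z2; rewrite covC covDl// !(covC Z). Qed.

Lemma cov_cstD (c : R) (X : Omega -> R) : X \in L2 ->
  cov (cst c + X) (cst c + X) = cov X X.
Proof.
move=> X2; have cX2 : cst c + X \in L2 := L2D (L2_cst c) X2.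
by rewrite covDl ?L2_cst// cov_cstl add0r covDr ?L2_cst// cov_cstr add0r.
Qed.

Lemma L2_additive_sum (f : (Omega -> R) -> R) :
    f 0 = 0 -> {in L2 &, {morph f : X Y / X + Y}} ->
  forall (I : Type) (r : seq I) (p : pred I) (F : I -> Omega -> R),
    (forall i, p i -> F i \in L2) ->
  f (\sum_(i <- r | p i) F i) = \sum_(i <- r | p i) f (F i).
Proof.
move=> f0 fD I r p F F2.
suff [_ ->] : \sum_(i <- r | p i) F i \in L2 /\
  f (\sum_(i <- r | p i) F i) = \sum_(i <- r | p i) f (F i) by [].
apply: (big_rec2 (fun X x => X \in L2 /\ f X = x)) => [|i X x pi [X2 <-]].
  by split; [exact: L2_cst 0|].
by split; [exact: L2D (F2 i pi) X2|rewrite fD // F2].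
Qed.

Lemma mean_sum (I : Type) (r : seq I) (p : pred I) (F : I -> Omega -> R) :
  (forall i, p i -> F i \in L2) ->
  mean (\sum_(i <- r | p i) F i) = \sum_(i <- r | p i) mean (F i).
Proof. by apply: L2_additive_sum; [exact: mean_cst|exact: meanD]. Qed.

Lemma cov_suml (I : Type) (r : seq I) (p : pred I) (F : I -> Omega -> R)
    (Z : Omega -> R) :
  (forall i, p i -> F i \in L2) -> Z \in L2 ->
  cov (\sum_(i <- r | p i) F i) Z = \sum_(i <- r | p i) cov (F i) Z.
Proof.
move=> F2 Z2; apply: (L2_additive_sum (cov^~ Z)) => //; first exact: cov_cstl.
by move=> X Y X2 Y2; exact: covDl.
Qed.

Lemma cov_sumr (I : Type) (r : seq I) (p : pred I) (F : I -> Omega -> R)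
    (Z : Omega -> R) :
  (forall i, p i -> F i \in L2) -> Z \in L2 ->
  cov Z (\sum_(i <- r | p i) F i) = \sum_(i <- r | p i) cov Z (F i).
Proof.
by move=> F2 Z2; rewrite covC cov_suml//; apply: eq_bigr => i _; rewrite covC.
Qed.

Lemma expectation_sqr {X : Omega -> R} : X \in L2 ->
  ('E_P[fun w => (X w ^+ 2)%R] = (mean X ^+ 2 + cov X X)%:E)%E.
Proof.
move=> X2; have X2_1 : X ^+ 2 \in Lfun P 1 by rewrite expr2; exact: Lfun2_mul_Lfun1.
have E2 : ('E_P[X ^+ 2] = (fine 'E_P[X ^+ 2])%:E)%E.
  by rewrite fineK// expectation_fin_num.
have := varianceE X2; rewrite /variance covariance_L2// (expectation_L2 X2) E2.
by rewrite -EFin_expe -EFinB => -[->]; rewrite addrC subrK.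
Qed.

End SecondMoments.

#[local] Hint Extern 1 (is_true (_ \in Lfun _ _)) =>
  first [apply: L2Z | apply: L2D | apply: L2_sum | apply: L2_cst] : L2.

Section AffineRisk.
Context {d : measure_display} {Omega : measurableType d} {R : realType}.
Context {S : finType} {N : nat}.
Variables (P : probability Omega R) (yh : 'I_N -> {set S}).
Variables (theta : S -> Omega -> R) (eps : 'I_N -> S -> Omega -> R).
Variables (mu tau : R) (sigma : S -> S -> R).
Hypothesis model : moment_model P yh theta eps mu tau sigma.
Local Notation L2 := (Lfun P 2%:E).
Local Notation mean := (mean P).
Local Notation cov := (cov P).

Let theta_L2 s : theta s \in L2.
Proof. by case: model. Qed.

Let eps_L2 n s : s \in yh n -> eps n s \in L2.
Proof. by case: model => _ [eps2 _]; exact: eps2. Qed.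

Let mean_theta s : mean (theta s) = mu.
Proof. by case: model => _ [_ [Eth _]]; rewrite /mean Eth. Qed.

Let var_theta s : cov (theta s) (theta s) = tau ^+ 2.
Proof. by case: model => _ [_ [_ [Vth _]]]; rewrite /cov Vth. Qed.

Let cov_theta_neq s t : t != s -> cov (theta s) (theta t) = 0.
Proof. by case: model => _ [_ [_ [_ [Cth _]]]] ts; rewrite /cov Cth // eq_sym. Qed.

Let mean_eps n s : s \in yh n -> mean (eps n s) = 0.
Proof. by case: model => _ [_ [_ [_ [_ [Eeps _]]]]] sn; rewrite /mean Eeps. Qed.

Let cov_eps n s t : s \in yh n -> t \in yh n ->
  cov (eps n s) (eps n t) = sigma s t.
Proof. by case: model => _ [_ [_ [_ [_ [_ [Ceps _]]]]]] sn tn; rewrite /cov Ceps. Qed.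

Let cov_eps_neq n m s t : s \in yh n -> t \in yh m -> m != n ->
  cov (eps n s) (eps m t) = 0.
Proof.
by case: model => _ [_ [_ [_ [_ [_ [_ [Ceps _]]]]]]] sn tm mn; rewrite /cov Ceps // eq_sym.
Qed.

Let cov_theta_eps n s t : s \in yh n -> cov (theta t) (eps n s) = 0.
Proof.
by case: model => _ [_ [_ [_ [_ [_ [_ [_ Cte]]]]]]] sn; rewrite /cov Cte.
Qed.

Definition theta_comb (a : S -> R) : Omega -> R := \sum_s a s *: theta s.

Definition eps_comb (b : 'I_N -> S -> R) : Omega -> R :=
  \sum_n \sum_(s in yh n) b n s *: eps n s.

Definition lin_comb (a : S -> R) (b : 'I_N -> S -> R) : Omega -> R :=
  theta_comb a + eps_comb b.

Lemma lin_combE a b w : lin_comb a b w =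
  \sum_s a s * theta s w + \sum_n \sum_(s in yh n) b n s * eps n s w.
Proof.
rewrite /lin_comb /theta_comb /eps_comb /= !fct_sumE.
by congr (_ + _); apply: eq_bigr => n _; rewrite fct_sumE.
Qed.

Let theta_comb_L2 a : theta_comb a \in L2.
Proof. by apply: L2_sum => s _; exact/L2Z. Qed.

Let eps_route_L2 b n : \sum_(s in yh n) b n s *: eps n s \in L2.
Proof. by apply: L2_sum => s sn; exact/L2Z/eps_L2. Qed.

Let eps_comb_L2 b : eps_comb b \in L2.
Proof. by apply: L2_sum => n _; exact: eps_route_L2. Qed.

#[local] Hint Resolve theta_L2 eps_L2 eps_route_L2 theta_comb_L2 eps_comb_L2 : L2.

Lemma mean_lin_comb a b : mean (lin_comb a b) = mu * \sum_s a s.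
Proof.
rewrite meanD ?mean_sum; auto with L2.
rewrite [X in _ + X]big1 ?addr0 => [|n _].
  by rewrite mulr_sumr; apply: eq_bigr => s _; rewrite meanZ// mean_theta mulrC.
rewrite mean_sum; auto with L2.
by apply: big1 => s sn; rewrite meanZ ?mean_eps ?mulr0; auto with L2.
Qed.

Lemma cov_theta_comb a a' :
  cov (theta_comb a) (theta_comb a') = tau ^+ 2 * \sum_s a s * a' s.
Proof.
rewrite cov_suml; auto with L2.
rewrite mulr_sumr; apply: eq_bigr => s _.
rewrite covZl ?cov_sumr; auto with L2.
rewrite (bigD1 s)//= big1 ?addr0 => [|t ts].
  by rewrite covZr ?var_theta; auto with L2; ring.
by rewrite covZr ?cov_theta_neq ?mulr0; auto with L2.
Qed.

Lemma cov_theta_eps_comb a b : cov (theta_comb a) (eps_comb b) = 0.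
Proof.
rewrite cov_suml; auto with L2.
apply: big1 => s _; rewrite covZl ?cov_sumr; auto with L2.
rewrite big1 ?mulr0 // => n _; rewrite cov_sumr; auto with L2.
by apply: big1 => t tn; rewrite covZr ?cov_theta_eps ?mulr0; auto with L2.
Qed.

Lemma cov_eps_comb b b' : cov (eps_comb b) (eps_comb b') =
  \sum_n \sum_(s in yh n) \sum_(t in yh n) b n s * b' n t * sigma s t.
Proof.
rewrite cov_suml; auto with L2.
apply: eq_bigr => n _; rewrite cov_suml; auto with L2.
apply: eq_bigr => s sn; rewrite covZl ?cov_sumr; auto with L2.
rewrite (bigD1 n)//= [X in _ + X]big1 ?addr0 => [|m mn].
  rewrite cov_sumr ?mulr_sumr; auto with L2; apply: eq_bigr => t tn.
  by rewrite covZr ?cov_eps ?mulrA; auto with L2.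
rewrite cov_sumr; auto with L2.
rewrite big1 ?mulr0 // => t tm.
by rewrite covZr ?cov_eps_neq ?mulr0; auto with L2.
Qed.

Lemma cov_lin_comb a b a' b' : cov (lin_comb a b) (lin_comb a' b') =
  tau ^+ 2 * \sum_s a s * a' s
  + \sum_n \sum_(s in yh n) \sum_(t in yh n) b n s * b' n t * sigma s t.
Proof.
rewrite covDl ?covDr; auto with L2.
rewrite cov_theta_comb cov_eps_comb (covC _ (eps_comb b)).
by rewrite !cov_theta_eps_comb !addr0 add0r.
Qed.

Lemma expectation_sqr_affine (c : R) a b :
  ('E_P[fun w => ((c + lin_comb a b w) ^+ 2)%R] =
   ((c + mu * \sum_s a s) ^+ 2 + tau ^+ 2 * \sum_s a s ^+ 2
    + \sum_n \sum_(s in yh n) \sum_(t in yh n) b n s * b n t * sigma s t)%:E)%E.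
Proof.
have X2 : cst c + lin_comb a b \in L2 by auto with L2.
rewrite (expectation_sqr P X2) meanD ?mean_cst ?mean_lin_comb; auto with L2.
rewrite cov_cstD ?cov_lin_comb; auto with L2.
by rewrite addrA; congr (_ + _ * _ + _)%:E.
Qed.

End AffineRisk.

Arguments expectation_sqr_affine {d Omega R S N P yh theta eps mu tau sigma}.

Section BlockSums.
Context {R : pzSemiRingType}.

Lemma sum_cst_card (I : finType) (p : pred I) (x : R) :
  \sum_(i | p i) x = #|[set i | p i]|%:R * x.
Proof.
rewrite mulr_natl -sumr_const; apply: eq_bigl => i; by rewrite inE.
Qed.

Lemma sum_double_count (I T : finType) (p : pred I) (Q : I -> pred T) (f : T -> R) :
  \sum_(i | p i) \sum_(x | Q i x) f x = \sum_x #|[set i | p i && Q i x]|%:R * f x.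
Proof.
rewrite (exchange_big_dep predT)//=; apply: eq_bigr => x _.
exact: sum_cst_card.
Qed.

Context {S : finType}.

Lemma sum_blocks_exchange (Q : pred {set S}) (D : pred S) (g : {set S} -> R)
    (f : S -> R) :
  (forall A s, Q A -> s \in A -> D s) ->
  \sum_(s | D s) (\sum_(A | Q A && (s \in A)) g A) * f s =
  \sum_(A | Q A) g A * \sum_(s in A) f s.
Proof.
move=> QD; under eq_bigr => s _ do rewrite mulr_suml.
rewrite (exchange_big_dep Q) => [|s A _ /andP[]//].
apply: eq_bigr => A QA; rewrite mulr_sumr; apply: eq_bigl => s.
by apply/andP/idP => [[_ /andP[]]|sA]; last by rewrite QA sA (QD A s).
Qed.

Lemma sum_block_of_trivIset (P : {set {set S}}) (A : {set S}) (s : S)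
    (g : {set S} -> R) :
  finset.trivIset P -> A \in P -> s \in A -> \sum_(B in P | s \in B) g B = g A.
Proof.
move=> triv AP sA; apply: big_pred1 => B; rewrite /= -[RHS]/(B == A).
apply/andP/eqP => [[BP sB]|->]; last by [].
apply/eqP; apply: contraT => BA.
by have := finset.trivIsetP triv B A BP AP BA; move/disjointFr => /(_ s sB); rewrite sA.
Qed.

End BlockSums.

Section SegmentRisk.
Context {d : measure_display} {Omega : measurableType d} {R : realType}.
Context {S : finType} {N : nat}.
Variables (P : probability Omega R) (yh : 'I_N -> {set S}).
Variables (theta : S -> Omega -> R) (eps : 'I_N -> S -> Omega -> R).
Variables (mu tau : R) (sigma : S -> S -> R).
Variables (y : {set S}) (Sy : {set {set S}}) (phi : {set S} -> nat -> R).
Hypothesis model : moment_model P yh theta eps mu tau sigma.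
Hypothesis Sy_partition : finset.partition Sy y.
Hypothesis phi0 : forall A, A \in Sy -> phi A 0 = 0.

Let ph A := phi A (NS yh A).
Let c A := ph A / (NS yh A)%:R.
Let a s := \sum_(A in Sy | s \in A) (ph A - 1).
Let b n s := \sum_(A | (A \in Sy) && (A \subset yh n) && (s \in A)) c A.
Let c0 := \sum_(A in Sy) (1 - ph A) * #|A|%:R * mu.

Let Sy_triv : finset.trivIset Sy.
Proof. by case/and3P: Sy_partition. Qed.

Lemma gseg_block_average A w : A \in Sy ->
  ph A * ((\sum_(n | A \subset yh n) \sum_(s in A) Tobs theta eps n s w)
          / (NS yh A)%:R) =
  ph A * \sum_(s in A) theta s w
  + c A * \sum_(n | A \subset yh n) \sum_(s in A) eps n s w.
Proof.
move=> ASy; rewrite /Tobs; under eq_bigr => n _ do rewrite big_split.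
rewrite big_split /= sum_cst_card -/(NS yh A) /c.
have [NA0|NA] := eqVneq (NS yh A) 0%N; last by field; rewrite pnatr_eq0.
(* No trip covers [A]: the average is [0 / 0 = 0], and [phi A 0 = 0] kills [theta]. *)
by rewrite /ph NA0 phi0// !mul0r addr0.
Qed.

Lemma sum_theta_coef (f : S -> R) :
  \sum_s a s * f s = \sum_(A in Sy) (ph A - 1) * \sum_(s in A) f s.
Proof. by apply: (sum_blocks_exchange (fun A => A \in Sy) predT). Qed.

Lemma sum_eps_coef n (f : S -> R) :
  \sum_(s in yh n) b n s * f s =
  \sum_(A | (A \in Sy) && (A \subset yh n)) c A * \sum_(s in A) f s.
Proof. by apply: sum_blocks_exchange => A s /andP[_ /fintype.subsetP]; apply. Qed.

Lemma gseg_error_decomp w :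
  gseg_est yh Sy phi mu theta eps w - \sum_(s in y) theta s w =
  c0 + lin_comb yh theta eps a b w.
Proof.
have epsE : \sum_n \sum_(s in yh n) b n s * eps n s w =
    \sum_(A in Sy) c A * \sum_(n | A \subset yh n) \sum_(s in A) eps n s w.
  under eq_bigr => n _ do rewrite sum_eps_coef.
  rewrite (exchange_big_dep (fun A => A \in Sy)) => [|n A _ /andP[]//].
  apply: eq_bigr => A ASy; rewrite mulr_sumr; apply: eq_bigl => n.
  by rewrite ASy.
rewrite lin_combE sum_theta_coef epsE /gseg_est.
case/and3P: Sy_partition => /eqP <- _ _; rewrite finset.big_trivIset//.
rewrite /c0 -sumrB -!big_split /=; apply: eq_bigr => A ASy.
rewrite -/(ph A) gseg_block_average//; ring.
Qed.

Lemma gseg_mean_error : c0 + mu * \sum_s a s = 0.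
Proof.
have -> : \sum_s a s = \sum_(A in Sy) (ph A - 1) * #|A|%:R.
  rewrite -(eq_bigr _ (fun s _ => mulr1 (a s))) sum_theta_coef.
  by apply: eq_bigr => A _; rewrite sumr_const.
by rewrite /c0 mulr_sumr -big_split big1 // => A _ /=; ring.
Qed.

Lemma gseg_theta_coef_sqr :
  \sum_s a s ^+ 2 = \sum_(A in Sy) (1 - ph A) ^+ 2 * #|A|%:R.
Proof.
rewrite (eq_bigr (fun s => a s * a s)) => [|s _]; last exact: expr2.
rewrite sum_theta_coef; apply: eq_bigr => A ASy.
rewrite (eq_bigr (fun _ => ph A - 1)) => [|s sA]; last exact: sum_block_of_trivIset.
by rewrite sumr_const -mulr_natr; ring.
Qed.

Lemma double_count_block_pairs (F : {set S} -> {set S} -> R) :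
  \sum_n \sum_(A | (A \in Sy) && (A \subset yh n))
          \sum_(B | (B \in Sy) && (B \subset yh n)) F A B =
  \sum_(A in Sy) \sum_(B in Sy) (NS yh (A :|: B))%:R * F A B.
Proof.
rewrite (exchange_big_dep (fun A => A \in Sy)) => [|n A _ /andP[]//].
apply: eq_bigr => A ASy.
rewrite (exchange_big_dep (fun B => B \in Sy)) => [|n B _ /andP[]//].
apply: eq_bigr => B BSy; rewrite sum_cst_card /NS.
by congr (_%:R * _); apply: eq_card => n; rewrite !inE ASy BSy finset.subUset.
Qed.

Lemma gseg_sigma_term :
  \sum_n \sum_(s in yh n) \sum_(t in yh n) b n s * b n t * sigma s t =
  \sum_(A in Sy) \sum_(B in Sy)
    (NS yh (A :|: B))%:R * (c A * c B * \sum_(s in A) \sum_(t in B) sigma s t).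
Proof.
rewrite -(double_count_block_pairs (fun A B =>
  c A * c B * \sum_(s in A) \sum_(t in B) sigma s t)).
apply: eq_bigr => n _.
have inner s : \sum_(t in yh n) b n s * b n t * sigma s t =
    b n s * \sum_(B | (B \in Sy) && (B \subset yh n)) c B * \sum_(t in B) sigma s t.
  by rewrite -sum_eps_coef mulr_sumr; apply: eq_bigr => t _; rewrite mulrA.
rewrite (eq_bigr _ (fun s _ => inner s)) sum_eps_coef; apply: eq_bigr => A _.
rewrite exchange_big mulr_sumr; apply: eq_bigr => B _.
by rewrite -mulr_sumr mulrA.
Qed.

Lemma risk_gseg : risk P (gseg_est yh Sy phi mu theta eps) theta y =
  (\sum_(A in Sy) \sum_(B in Sy)
     ((NS yh (A :|: B))%:R / ((NS yh A)%:R * (NS yh B)%:R)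
      * phi A (NS yh A) * phi B (NS yh B)
      * (\sum_(s in A) \sum_(t in B) sigma s t))
   + \sum_(A in Sy) (1 - phi A (NS yh A)) ^+ 2 * #|A|%:R * tau ^+ 2)%:E.
Proof.
rewrite /risk; have -> : (fun w => ((gseg_est yh Sy phi mu theta eps w - \sum_(s in y) theta s w)
    ^+ 2)%R) = fun w => ((c0 + lin_comb yh theta eps a b w) ^+ 2)%R.
  by apply/funext => w; rewrite gseg_error_decomp.
rewrite (expectation_sqr_affine model) gseg_mean_error gseg_theta_coef_sqr gseg_sigma_term.
rewrite expr0n add0r addrC mulr_sumr; congr (_ + _)%:E.
  apply: eq_bigr => A _; apply: eq_bigr => B _.
  by rewrite /c /ph invfM; ring.
by apply: eq_bigr => A _; rewrite /ph; ring.
Qed.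

End SegmentRisk.

Section RouteRisk.
Context {d : measure_display} {Omega : measurableType d} {R : realType}.
Context {S : finType} {N : nat}.
Variables (P : probability Omega R) (yh : 'I_N -> {set S}).
Variables (theta : S -> Omega -> R) (eps : 'I_N -> S -> Omega -> R).
Variables (mu tau : R) (sigma : S -> S -> R).
Hypothesis model : moment_model P yh theta eps mu tau sigma.
Variables (y : {set S}) (delta : {set {set S}}) (phid : nat -> R).

Let ph := phid (Mdel yh delta).
Let k := ph / (Mdel yh delta)%:R.
Let Nd s : R := (Ndel1 yh delta s)%:R.
Let a s := k * Nd s - (s \in y)%:R.
Let b n (s : S) := if yh n \in delta then k else 0.
Let c0 := (1 - ph) * #|y|%:R * mu.

Lemma mem_Sdel {n s} : yh n \in delta -> s \in yh n -> s \in Sdel delta.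
Proof. by move=> dn sn; apply/finset.bigcupP; exists (yh n). Qed.

Lemma Ndel1_eq0 s : s \notin Sdel delta -> Ndel1 yh delta s = 0%N.
Proof.
move=> sS; apply: eq_card0 => n; rewrite !inE.
by apply: contraNF sS => /andP[dn sn]; exact: mem_Sdel dn sn.
Qed.

Lemma Ndel2_eq0 s t : (s \notin Sdel delta) || (t \notin Sdel delta) ->
  Ndel2 yh delta s t = 0%N.
Proof.
move=> stS; apply: eq_card0 => n; rewrite !inE.
apply: contraTF stS => /and3P[dn sn tn].
by rewrite negb_or !negbK (mem_Sdel dn sn) (mem_Sdel dn tn).
Qed.

Lemma sum_delta_routes (f : S -> R) :
  \sum_(n | yh n \in delta) \sum_(s in yh n) f s = \sum_s Nd s * f s.
Proof. exact: sum_double_count. Qed.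

Lemma route_error_decomp w :
  route_est yh delta phid y mu theta eps w - \sum_(s in y) theta s w =
  c0 + lin_comb yh theta eps a b w.
Proof.
have thetaE : \sum_s a s * theta s w =
    k * \sum_s Nd s * theta s w - \sum_(s in y) theta s w.
  rewrite mulr_sumr (big_mkcond (fun s => s \in y)) -sumrB.
  by apply: eq_bigr => s _; rewrite /a; case: (s \in y) => /=; ring.
have epsE : \sum_n \sum_(s in yh n) b n s * eps n s w =
    k * \sum_(n | yh n \in delta) \sum_(s in yh n) eps n s w.
  rewrite mulr_sumr [RHS]big_mkcond; apply: eq_bigr => n _; rewrite /b.
  by case: ifP => _; [rewrite mulr_sumr|rewrite big1 // => s _; rewrite mul0r].
rewrite lin_combE thetaE epsE /route_est /Tobs.
under eq_bigr => n _ do rewrite big_split.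
rewrite big_split /= sum_delta_routes /c0 /k /ph; ring.
Qed.

Lemma route_mean_error :
  c0 + mu * \sum_s a s = ph * (ybar yh delta - #|y|%:R) * mu.
Proof.
have sumNd : \sum_s Nd s = \sum_(n | yh n \in delta) #|yh n|%:R.
  rewrite -(eq_bigr _ (fun s _ => mulr1 (Nd s))) -sum_delta_routes.
  by apply: eq_bigr => n _; rewrite sumr_const.
have sumy : \sum_s (s \in y)%:R = #|y|%:R :> R.
  by rewrite -sumr_const [RHS]big_mkcond; apply: eq_bigr => s _; case: (s \in y).
rewrite sumrB -mulr_sumr sumNd sumy /c0 /k /ybar; ring.
Qed.

Lemma route_theta_coef_sqr :
  \sum_s a s ^+ 2 =
  \sum_(s in Sdel delta :\: y) (ph * Nd s / (Mdel yh delta)%:R) ^+ 2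
  + \sum_(s in y) (1 - ph * Nd s / (Mdel yh delta)%:R) ^+ 2.
Proof.
rewrite (bigID (fun s => s \in y)) /= addrC; congr (_ + _).
  rewrite big_mkcond [RHS]big_mkcond; apply: eq_bigr => s _.
  rewrite finset.in_setD /a /k; case: (s \in y) => //=.
  have [sS|sS] := boolP (s \in Sdel delta); first by rewrite mulrAC subr0.
  by rewrite /Nd Ndel1_eq0 // !mulr0 subr0 expr0n.
by apply: eq_bigr => s sy; rewrite /a /k sy /=; ring.
Qed.

Lemma route_sigma_term :
  \sum_n \sum_(s in yh n) \sum_(t in yh n) b n s * b n t * sigma s t =
  k ^+ 2 * \sum_(s in Sdel delta) \sum_(t in Sdel delta)
             (Ndel2 yh delta s t)%:R * sigma s t.
Proof.
have routesE : \sum_n \sum_(s in yh n) \sum_(t in yh n) b n s * b n t * sigma s t =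
    k ^+ 2 * \sum_(n | yh n \in delta) \sum_(s in yh n) \sum_(t in yh n) sigma s t.
  rewrite mulr_sumr [RHS]big_mkcond; apply: eq_bigr => n _; rewrite /b.
  case: ifP => _; last by rewrite big1 // => s _; rewrite big1 // => t _; rewrite !mul0r.
  rewrite mulr_sumr; apply: eq_bigr => s _; rewrite mulr_sumr.
  by apply: eq_bigr => t _; rewrite expr2.
rewrite routesE (exchange_big_dep predT) //=; congr (_ * _).
rewrite [RHS]big_rmcond => [|s sS]; last first.
  by apply: big1 => t _; rewrite Ndel2_eq0 ?sS ?mul0r.
apply: eq_bigr => s _; rewrite sum_double_count [RHS]big_rmcond => [|t tS]; last first.
  by rewrite Ndel2_eq0 ?tS ?orbT ?mul0r.
apply: eq_bigr => t _; rewrite /Ndel2; congr (_%:R * _).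
by apply: eq_card => n; rewrite !inE andbA.
Qed.

Lemma risk_route :
  risk P (route_est yh delta phid y mu theta eps) theta y =
  ((ph / (Mdel yh delta)%:R) ^+ 2
     * (\sum_(s in Sdel delta) \sum_(t in Sdel delta)
          (Ndel2 yh delta s t)%:R * sigma s t)
   + (ph * (ybar yh delta - #|y|%:R) * mu) ^+ 2
   + \sum_(s in Sdel delta :\: y)
       (ph * (Ndel1 yh delta s)%:R / (Mdel yh delta)%:R) ^+ 2 * tau ^+ 2
   + \sum_(s in y)
       (1 - ph * (Ndel1 yh delta s)%:R / (Mdel yh delta)%:R) ^+ 2 * tau ^+ 2)%:E.
Proof.
rewrite /risk; have -> : (fun w => ((route_est yh delta phid y mu theta eps w
    - \sum_(s in y) theta s w) ^+ 2)%R) = fun w => ((c0 + lin_comb yh theta eps a b w) ^+ 2)%R.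
  by apply/funext => w; rewrite route_error_decomp.
rewrite (expectation_sqr_affine model) route_mean_error route_theta_coef_sqr route_sigma_term.
by rewrite -!mulr_suml /k; congr (_%:E); ring.
Qed.

End RouteRisk.

Theorem proposition2p3
  (d : measure_display) (Omega : measurableType d) (R : realType)
  (P : probability Omega R)
  (S : finType) (N : nat) (yh : 'I_N -> {set S})
  (theta : S -> Omega -> R) (eps : 'I_N -> S -> Omega -> R)
  (mu tau : R) (sigma : S -> S -> R) (y : {set S}) :
  (forall n, yh n != finset.set0) ->
  moment_model P yh theta eps mu tau sigma ->
  (* (1) generalized segment-based estimator *)
  (forall (Sy : {set {set S}}) (phi : {set S} -> nat -> R),
     finset.partition Sy y ->
     (forall A, A \in Sy -> phi A 0%N = 0) ->
     risk P (gseg_est yh Sy phi mu theta eps) theta y =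
     (\sum_(A in Sy) \sum_(B in Sy)
        ((NS yh (A :|: B))%:R / ((NS yh A)%:R * (NS yh B)%:R)
         * phi A (NS yh A) * phi B (NS yh B)
         * (\sum_(s in A) \sum_(t in B) sigma s t))
      + \sum_(A in Sy) (1 - phi A (NS yh A)) ^+ 2 * #|A|%:R * tau ^+ 2)%:E)
  /\
  (* (2) route-based estimator *)
  (forall (delta : {set {set S}}) (phid : nat -> R),
     (forall y', y' \in delta -> exists n, yh n = y') ->
     phid 0%N = 0 ->
     let ph := phid (Mdel yh delta) in
     let M := (Mdel yh delta)%:R in
     risk P (route_est yh delta phid y mu theta eps) theta y =
     ((ph / M) ^+ 2
        * (\sum_(s in Sdel delta) \sum_(t in Sdel delta)
             (Ndel2 yh delta s t)%:R * sigma s t)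
      + (ph * (ybar yh delta - #|y|%:R) * mu) ^+ 2
      + \sum_(s in Sdel delta :\: y) (ph * (Ndel1 yh delta s)%:R / M) ^+ 2 * tau ^+ 2
      + \sum_(s in y) (1 - ph * (Ndel1 yh delta s)%:R / M) ^+ 2 * tau ^+ 2)%:E).
Proof.
move=> _ model; split=> [Sy phi Sy_partition phi0 | delta phid _ _].
  exact: risk_gseg.
exact: risk_route.
Qed.
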